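(* Let $G$ and $H$ be two (nonempty) graphs that are not both complete. (i) If $\gamma(G)=1$, then $\mu_t(G+H)=n(G)+n(H)-1$. (ii) If $\gamma(G)\ne 1$ and $\gamma(H)\ne 1$, then $\mu_t(G+H)=n(G)+n(H)-2$.
   Context: All graphs are finite, simple and undirected; $n(G)$ denotes the order and $\gamma(G)$ the domination number of $G$. The join $G+H$ is the graph obtained from disjoint copies of $G$ and $H$ by adding an edge between every vertex of $G$ and every vertex of $H$. Let $F$ be a connected graph and $X\subseteq V(F)$. Two vertices $x,y\in V(F)$ are $X$-visible if there exists a shortest $x,y$-path in $F$ none of whose internal vertices (i.e., vertices other than $x$ and $y$) belongs to $X$. The set $X$ is a total mutual-visibility set of $F$ if every two vertices of $F$ are $X$-visible (the empty set is allowed). The total mutual-visibility number $\mu_t(F)$ is the maximum cardinality of a total mutual-visibility set of $F$. *)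

From mathcomp Require Import all_boot all_order.
From mathcomp Require Import boolp.
Set Implicit Arguments. Unset Strict Implicit. Unset Printing Implicit Defensive.

Section Graphs.
Variable V : finType.
Implicit Types (e : rel V) (x y : V) (X D : {set V}).

Definition simple_graph e := symmetric e /\ irreflexive e.

Definition complete e := forall x y, x != y -> e x y.

(* p is an x,y-walk: the vertex sequence is x :: p, ending at y *)
Definition is_walk e x y (p : seq V) := path e x p && (last x p == y).

Definition is_shortest e x y (p : seq V) :=
  is_walk e x y p /\ forall q, is_walk e x y q -> size p <= size q.

Definition visible e X x y :=
  exists p, is_shortest e x y p /\
    forall z, z \in x :: p -> z != x -> z != y -> z \notin X.

Definition total_mv_set e X := forall x y, visible e X x y.

Definition mu_t e : nat := \max_(X : {set V} | `[< total_mv_set e X >]) #|X|.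

Definition dominating e D :=
  [forall v, (v \in D) || [exists u in D, e u v]].

Definition domination_number e : nat :=
  \big[minn/#|V|]_(D : {set V} | dominating e D) #|D|.

End Graphs.

Definition join_rel (T U : finType) (eT : rel T) (eU : rel U) : rel (T + U)%type :=
  fun a b => match a, b with
             | inl x, inl y => eT x y
             | inr x, inr y => eU x y
             | _, _ => true
             end.

From mathcomp Require Import all_boot all_order.
From mathcomp Require Import boolp.
From mathcomp Require Import zify.
Set Implicit Arguments. Unset Strict Implicit. Unset Printing Implicit Defensive.
Import Order.TTheory.

(* The join G + H has diameter at most 2, so a set X is a total mutual-visibility
   set exactly when every two distinct non-adjacent vertices have a common
   neighbour outside X; in particular every vertex must keep a neighbour outside
   X as soon as it has a distinct non-neighbour.  If G has a universal vertex w,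
   the complement of w is such a set, and it is optimal because G + H is not
   complete.  If neither G nor H has a universal vertex, every vertex has a
   distinct non-neighbour, which forces two vertices outside X, and the
   complement of one vertex of G and one vertex of H attains this bound. *)

Section Graph.
Variable V : finType.
Variable e : rel V.

Definition universal (w : V) := forall v, v != w -> e w v.

Lemma domination_number_attained :
  exists2 D, dominating e D & #|D| = domination_number e.
Proof.
have domT : dominating e setT by apply/forallP => v; rewrite inE.
rewrite /domination_number -minEnat.
have [D domD ->] := @eq_bigmin _ _ _ #|V| setT (dominating e) (fun D => #|D|)
  domT (fun D _ => max_card (mem D)).
by exists D.
Qed.

Lemma domination_number_gt0 : 0 < #|V| -> 0 < domination_number e.
Proof.
move=> /card_gt0P [v _]; have [D /forallP /(_ v) domD <-] := domination_number_attained.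
apply/card_gt0P; case/orP: domD => [vD | /existsP [u /andP [uD _]]].
  by exists v.
by exists u.
Qed.

Lemma domination_number_eq1P :
  0 < #|V| -> domination_number e = 1 <-> exists w, universal w.
Proof.
move=> V_gt0; split.
  have [D domD <-] := domination_number_attained.
  move=> /eqP /cards1P [w defD]; exists w => v vw; subst D.
  move/forallP: domD => /(_ v); rewrite inE (negbTE vw) /=.
  by case/existsP => u; rewrite inE => /andP [/eqP ->].
move=> [w w_univ]; apply/eqP; rewrite eqn_leq domination_number_gt0 // andbT.
have dom_w : dominating e [set w].
  apply/forallP => v; rewrite inE; case: eqVneq => //= vw.
  by apply/existsP; exists w; rewrite inE eqxx w_univ.
rewrite -(cards1 w) /domination_number -minEnat.
exact: (bigmin_le_cond _ (fun D : {set V} => #|D|) dom_w).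
Qed.

Lemma no_universal_non_nbr a :
  ~ (exists w, universal w) -> exists2 b, a != b & ~~ e a b.
Proof.
move=> nuniv; apply: contrapT => none; apply: nuniv; exists a => v va.
by apply: contrapT => nav; apply: none; exists v; [rewrite eq_sym | apply/negP].
Qed.

Lemma total_mv_set_le_mu_t (X : {set V}) : total_mv_set e X -> #|X| <= mu_t e.
Proof.
move=> mvX; exact: (@leq_bigmax_cond _ (fun X : {set V} => `[< total_mv_set e X >])
  (fun X => #|X|) X (asboolT mvX)).
Qed.

Lemma mu_t_le n : (forall X, total_mv_set e X -> #|X| <= n) -> mu_t e <= n.
Proof. by move=> bound; apply/bigmax_leqP => X /asboolP /bound. Qed.

Lemma total_mv_set_common_nbr (X : {set V}) :
  (forall a b, a != b -> ~~ e a b -> exists2 c, e a c && e c b & c \notin X) ->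
  total_mv_set e X.
Proof.
move=> nbrs a b; case: (eqVneq a b) => [<- | ab].
  exists [::]; split; first by split; [rewrite /is_walk /= eqxx |].
  by move=> z; rewrite inE => /eqP ->; rewrite eqxx.
case eab: (e a b).
  exists [:: b]; split.
    split=> [|[|q0 q] //]; first by rewrite /is_walk /= eab eqxx.
    by rewrite /is_walk /= => /eqP ba; rewrite ba eqxx in ab.
  by move=> z; rewrite !inE => /orP [/eqP -> | /eqP ->]; rewrite eqxx.
have [c /andP [ac cb] cX] := nbrs a b ab (negbT eab).
exists [:: c; b]; split.
  split=> [|[|q0 [|q1 q]] //]; first by rewrite /is_walk /= ac cb eqxx.
    by rewrite /is_walk /= => /eqP ba; rewrite ba eqxx in ab.
  by rewrite /is_walk /= andbT => /andP [aq0 /eqP q0b]; rewrite -q0b aq0 in eab.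
by move=> z; rewrite !inE => /or3P [/eqP -> | /eqP -> | /eqP ->]; rewrite ?eqxx.
Qed.

Hypothesis e_irrefl : irreflexive e.

(* Any shortest path between vertices at distance 2 has exactly one internal vertex. *)
Lemma visible_common_nbr (X : {set V}) a b c :
  visible e X a b -> a != b -> ~~ e a b -> e a c -> e c b ->
  exists2 c', e a c' && e c' b & c' \notin X.
Proof.
move=> [p [[walk_p p_min] p_int]] ab nab ac cb.
have := p_min [:: c; b]; rewrite /is_walk /= ac cb eqxx => /(_ isT).
case: p walk_p p_int p_min => [|p0 [|p1 [|p2 p]]] //=; rewrite /is_walk /=.
- by move=> /eqP ba; rewrite ba eqxx in ab.
- by rewrite andbT => /andP [ap0 /eqP p0b]; rewrite -p0b ap0 in nab.
rewrite andbT => /andP [/andP [ap0 p0b] /eqP p1b] p_int _; subst p1.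
exists p0; first by rewrite ap0 p0b.
apply: p_int; first by rewrite !inE eqxx orbT.
  by apply: contraTneq ap0 => ->; rewrite e_irrefl.
by apply: contraTneq p0b => ->; rewrite e_irrefl.
Qed.

Hypothesis common_nbr : forall a b, a != b -> ~~ e a b -> exists c, e a c && e c b.

Lemma total_mv_set_nbr_outside (X : {set V}) a b :
  total_mv_set e X -> a != b -> ~~ e a b -> exists2 c, e a c & c \notin X.
Proof.
move=> mvX ab nab; have [c /andP [ac cb]] := common_nbr ab nab.
have [c' /andP [ac' _] c'X] := visible_common_nbr (mvX a b) ab nab ac cb.
by exists c'.
Qed.

Lemma total_mv_set_card_lt (X : {set V}) :
  (exists a b, a != b /\ ~~ e a b) -> total_mv_set e X -> #|X| < #|V|.
Proof.
move=> [a [b [ab nab]]] mvX; have [c _ cX] := total_mv_set_nbr_outside mvX ab nab.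
by rewrite -cardsT; apply: proper_card; rewrite properT; apply: contraNneq cX => ->.
Qed.

Lemma total_mv_set_card_add2_le (X : {set V}) (v : V) :
  (forall a, exists2 b, a != b & ~~ e a b) -> total_mv_set e X -> #|X| + 2 <= #|V|.
Proof.
move=> non_nbr mvX.
have nbr_outside a : exists2 c, e a c & c \notin X.
  by have [b ab nab] := non_nbr a; apply: total_mv_set_nbr_outside mvX ab nab.
have [c1 _ c1X] := nbr_outside v; have [c2 c12 c2X] := nbr_outside c1.
have c1c2 : c1 != c2 by apply: contraTneq c12 => ->; rewrite e_irrefl.
have : X \subset ~: [set c1; c2].
  by apply/subsetP => z zX; rewrite !inE; apply/norP; split; apply: contraTneq zX => ->.
move/subset_leq_card; have := cardsC [set c1; c2]; rewrite cards2 c1c2; lia.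
Qed.

End Graph.

Section Join.
Variables (T U : finType) (eT : rel T) (eU : rel U).
Hypotheses (eT_sym : symmetric eT) (eT_irrefl : irreflexive eT).
Hypothesis eU_irrefl : irreflexive eU.
Variables (t0 : T) (u0 : U).

Local Notation E := (join_rel eT eU).

Lemma join_irrefl : irreflexive E.
Proof. by case=> x /=; [apply: eT_irrefl | apply: eU_irrefl]. Qed.

Lemma join_common_nbr a b : a != b -> ~~ E a b -> exists c, E a c && E c b.
Proof. by case: a b => x [] y //= _ _; [exists (inr u0) | exists (inl t0)]. Qed.

Lemma join_non_edge :
  ~ (complete eT /\ complete eU) -> exists a b, a != b /\ ~~ E a b.
Proof.
move=> ncomp; apply: contrapT => non_edge; apply: ncomp.
have edge a b : a != b -> E a b.
  by move=> ab; apply: contrapT => /negP nab; apply: non_edge; exists a, b.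
by split=> x y xy; [apply: (edge (inl x) (inl y)) | apply: (edge (inr x) (inr y))].
Qed.

Lemma join_non_nbr :
  ~ (exists w, universal eT w) -> ~ (exists w, universal eU w) ->
  forall a, exists2 b, a != b & ~~ E a b.
Proof.
move=> nuT nuU [] a; [have [b ab nab] := no_universal_non_nbr a nuT; exists (inl b)
                     | have [b ab nab] := no_universal_non_nbr a nuU; exists (inr b)] => //.
Qed.

Lemma join_universal_mv_set w :
  universal eT w -> total_mv_set E (~: [set inl w]).
Proof.
move=> w_univ; apply: total_mv_set_common_nbr; case=> x [] y //= xy nxy;
  exists (inl w); rewrite /= ?inE ?eqxx //.
have xw : x != w by apply: contraNneq nxy => xw; rewrite xw w_univ // -xw eq_sym.
have yw : y != w by apply: contraNneq nxy => yw; rewrite yw eT_sym w_univ // -yw.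
by rewrite eT_sym !w_univ.
Qed.

Lemma join_two_vertex_mv_set : total_mv_set E (~: [set inl t0; inr u0]).
Proof.
apply: total_mv_set_common_nbr; case=> x [] y //= _ _;
  [exists (inr u0) | exists (inl t0)]; by rewrite /= ?inE ?eqxx ?orbT.
Qed.

End Join.

Theorem corollary2p7 (T U : finType) (eT : rel T) (eU : rel U) :
  simple_graph eT -> simple_graph eU ->
  0 < #|T| -> 0 < #|U| ->
  ~ (complete eT /\ complete eU) ->
  (domination_number eT = 1 ->
     mu_t (join_rel eT eU) = #|T| + #|U| - 1) /\
  (domination_number eT <> 1 -> domination_number eU <> 1 ->
     mu_t (join_rel eT eU) = #|T| + #|U| - 2).
Proof.
move=> [eT_sym eT_irr] [eU_sym eU_irr] T_gt0 U_gt0 ncomp.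
have [t0 _] := card_gt0P T_gt0; have [u0 _] := card_gt0P U_gt0.
have cardE : #|{: T + U}| = #|T| + #|U| := card_sum _ _.
have irrE := join_irrefl eT_irr eU_irr.
have nbrE := join_common_nbr (eT := eT) (eU := eU) t0 u0.
split=> [/(domination_number_eq1P _ T_gt0) [w w_univ] | nuT nuU].
  apply/eqP; rewrite eqn_leq; apply/andP; split.
    have non_edge := join_non_edge ncomp.
    apply: mu_t_le => X /(total_mv_set_card_lt irrE nbrE non_edge); rewrite cardE; lia.
  have := total_mv_set_le_mu_t (join_universal_mv_set eU eT_sym w_univ).
  rewrite cardsC1 cardE; lia.
apply/eqP; rewrite eqn_leq; apply/andP; split.
  have non_nbr := join_non_nbr (nuT \o (domination_number_eq1P _ T_gt0).2)
                               (nuU \o (domination_number_eq1P _ U_gt0).2).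
  apply: mu_t_le => X /(total_mv_set_card_add2_le irrE nbrE (inl t0) non_nbr).
  rewrite cardE; lia.
have := total_mv_set_le_mu_t (join_two_vertex_mv_set eT eU t0 u0).
have := cardsC [set inl t0; inr u0 : T + U]; rewrite cards2 cardE /=; lia.
Qed.
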